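(* Let $\mathcal{A}$ be an alternative $W^{*}$-factor, $\mathcal{B}$ an alternative complex $\ast$-algebra, and $\Phi:\mathcal{A}\to\mathcal{B}$ a bijection preserving product $ab+ba^{*}$ (resp. $ab-ba^{*}$). Let $p_{1}\in\mathcal{A}$ be a projection with $p_{1}\neq 1_{\mathcal{A}}$, $p_{2}=1_{\mathcal{A}}-p_{1}$, and $\mathcal{A}_{ij}=p_{i}\mathcal{A}p_{j}$. Then for all $a_{11}\in\mathcal{A}_{11}$, $b_{12}\in\mathcal{A}_{12}$, $c_{21}\in\mathcal{A}_{21}$, $d_{22}\in\mathcal{A}_{22}$: (i) $\Phi(a_{11}+b_{12})=\Phi(a_{11})+\Phi(b_{12})$; (ii) $\Phi(a_{11}+c_{21})=\Phi(a_{11})+\Phi(c_{21})$; (iii) $\Phi(b_{12}+d_{22})=\Phi(b_{12})+\Phi(d_{22})$; (iv) $\Phi(c_{21}+d_{22})=\Phi(c_{21})+\Phi(d_{22})$.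
   Context: An alternative $W^{*}$-factor is a prime alternative $C^{*}$-algebra (complete normed alternative complex $\ast$-algebra with $\|a^{*}a\|=\|a\|^{2}$) that is a dual Banach space; it is unital. A projection is a nonzero self-adjoint idempotent. $\mathcal{A}=\mathcal{A}_{11}\oplus\mathcal{A}_{12}\oplus\mathcal{A}_{21}\oplus\mathcal{A}_{22}$ is the Peirce decomposition with respect to $p_{1}$. $\Phi$ preserves product $ab+ba^{*}$ (resp. $ab-ba^{*}$) if $\Phi(ab+ba^{*})=\Phi(a)\Phi(b)+\Phi(b)\Phi(a)^{*}$ (resp. $\Phi(ab-ba^{*})=\Phi(a)\Phi(b)-\Phi(b)\Phi(a)^{*}$) for all $a,b\in\mathcal{A}$. *)

From mathcomp Require Import all_boot all_order all_algebra.
From mathcomp Require Import complex.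
From mathcomp Require Import all_classical all_reals all_analysis.
Import Order.TTheory GRing.Theory Num.Theory ComplexField.
Import numFieldNormedType.Exports.
Set Implicit Arguments. Unset Strict Implicit. Unset Printing Implicit Defensive.
Local Open Scope ring_scope.
Local Open Scope classical_set_scope.

Section Defs.
Variable R : realType.
Local Notation C := R[i].

Definition complex_star_algebra (V : lmodType C) (mul : V -> V -> V)
  (star : V -> V) : Prop :=
  [/\ (forall (k : C) (a b c : V), mul (k *: a + b) c = k *: mul a c + mul b c),
      (forall (k : C) (a b c : V), mul a (k *: b + c) = k *: mul a b + mul a c),
      (forall (k : C) (a b : V), star (k *: a + b) = k^* *: star a + star b),
      (forall a : V, star (star a) = a) &
      (forall a b : V, star (mul a b) = mul (star b) (star a))].

Definition alternative (V : Type) (mul : V -> V -> V) : Prop :=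
  (forall x y : V, mul x (mul x y) = mul (mul x x) y) /\
  (forall x y : V, mul (mul y x) x = mul y (mul x x)).

Definition alternative_star_algebra (V : lmodType C) (mul : V -> V -> V)
  (star : V -> V) : Prop :=
  complex_star_algebra mul star /\ alternative mul.

Definition is_ideal (V : lmodType C) (mul : V -> V -> V) (I : set V) : Prop :=
  [/\ I 0, (forall (k : C) a b, I a -> I b -> I (k *: a + b)),
      (forall a x, I x -> I (mul a x)) & (forall a x, I x -> I (mul x a))].

Definition prime_alg (V : lmodType C) (mul : V -> V -> V) : Prop :=
  forall I J : set V, is_ideal mul I -> is_ideal mul J ->
    (forall x y, I x -> J y -> mul x y = 0) -> I = [set 0] \/ J = [set 0].

Definition bounded_linear_functional (X : normedModType C) (f : X -> C) : Prop :=
  (forall (k : C) (x y : X), f (k *: x + y) = k * f x + f y) /\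
  exists M : C, forall x : X, `|f x| <= M * `|x|.

(* A is a dual Banach space: it is isometrically (linearly) isomorphic to the
   Banach dual X^* of some normed space X (norm of X^* = operator norm). *)
Definition dual_Banach_space (A : normedModType C) : Prop :=
  exists (X : normedModType C) (T : A -> X -> C),
  [/\ (forall (k : C) (a b : A), T (k *: a + b) = fun x => k * T a x + T b x),
      (forall a, bounded_linear_functional (T a)),
      (forall f, bounded_linear_functional f -> exists a, T a = f) &
      (forall a : A,
        (forall x : X, `|x| <= 1 -> `|T a x| <= `|a|) /\
        (forall M : C, (forall x : X, `|x| <= 1 -> `|T a x| <= M) -> `|a| <= M))].

Definition alternative_Cstar_algebra (A : completeNormedModType C)
  (mul : A -> A -> A) (star : A -> A) : Prop :=
  [/\ alternative_star_algebra mul star,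
      (forall a b : A, `|mul a b| <= `|a| * `|b|) &
      (forall a : A, `|mul (star a) a| = `|a| ^+ 2)].

Definition alternative_Wstar_factor (A : completeNormedModType C)
  (mul : A -> A -> A) (star : A -> A) (one : A) : Prop :=
  [/\ alternative_Cstar_algebra mul star, prime_alg mul, dual_Banach_space A &
      (forall a, mul one a = a /\ mul a one = a)].

Definition projection (V : lmodType C) (mul : V -> V -> V) (star : V -> V)
  (p : V) : Prop :=
  [/\ p != 0, star p = p & mul p p = p].

Definition peirce (V : lmodType C) (mul : V -> V -> V) (p q : V) (x : V) : Prop :=
  exists a : V, x = mul (mul p a) q.

End Defs.

From mathcomp Require Import all_boot all_order all_algebra.
From mathcomp Require Import complex.
From mathcomp Require Import all_classical all_reals all_analysis.
From mathcomp Require Import ring.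
Import Order.TTheory GRing.Theory Num.Theory ComplexField.
Import numFieldNormedType.Exports.
Set Implicit Arguments. Unset Strict Implicit. Unset Printing Implicit Defensive.
Local Open Scope ring_scope.

(* Both preserved products are the "twisted product"  tprod eps a b, and the
   maps  y |-> tprod c y  and  y |-> tprod y c  "transfer" additive relations:
   if Phi t = Phi u + Phi v then the same holds for their images.  The only
   facts used about A are: it is a unital alternative *-algebra, the Peirce
   multiplication rules A_ab A_cd <= A_(a+b-c, d-b+c) for a projection p,
   and primeness, which (via an ideal and its annihilator) forces an element
   of A_11 annihilating A_12 on the right and A_21 on the left to vanish.

   For a in A_11, w in A_12 or A_21 and a preimage t of Phi a + Phi w we
   show, by composing transfer maps that kill a or w, that t = s + a + w
   with s in A_11 (corner_decomp), and that s annihilates A_12 and A_21;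
   hence s = 0.  Applying this to p1 and to p2 = 1 - p1 gives the four
   identities of the theorem. *)

(* If k is not idempotent, a vector with k (k w) = k w is zero; this is why
   Peirce eigenvalues other than 0 and 1 force vanishing. *)
Lemma nonidem_scale_zero (R : realType) (V : lmodType R[i]) (k : R[i]) (w : V) :
  k * k != k -> k *: (k *: w) = k *: w -> w = 0.
Proof.
move=> hk; rewrite scalerA => /eqP; rewrite -subr_eq0 -scalerBl.
by rewrite scaler_eq0 subr_eq0 (negPf hk) => /eqP.
Qed.

Lemma two_nonidem (R : realType) : (2 : R[i]) * 2 != 2.
Proof. by rewrite -subr_eq0 (_ : 2 * 2 - 2 = 2) ?pnatr_eq0 //; ring. Qed.

Lemma m1_nonidem (R : realType) : (-1 : R[i]) * -1 != -1.
Proof. by rewrite -subr_eq0 (_ : -1 * -1 - -1 = 2) ?pnatr_eq0 //; ring. Qed.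

Section StarAlgebra.
Variables (R : realType) (V : lmodType R[i]) (mul : V -> V -> V) (star : V -> V).
Hypothesis HV : complex_star_algebra mul star.

Lemma sa_mul0l c : mul 0 c = 0.
Proof.
case: HV => Hl _ _ _ _; have := Hl (-1) c c c.
by rewrite scaleN1r addNr scaleN1r addNr.
Qed.

Lemma sa_mul0r c : mul c 0 = 0.
Proof.
case: HV => _ Hr _ _ _; have := Hr (-1) c c c.
by rewrite scaleN1r addNr scaleN1r addNr.
Qed.

Lemma sa_mulDl a b c : mul (a + b) c = mul a c + mul b c.
Proof. by case: HV => Hl _ _ _ _; have := Hl 1 a b c; rewrite !scale1r. Qed.

Lemma sa_mulDr a b c : mul a (b + c) = mul a b + mul a c.
Proof. by case: HV => _ Hr _ _ _; have := Hr 1 a b c; rewrite !scale1r. Qed.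

Lemma sa_mulZl k a c : mul (k *: a) c = k *: mul a c.
Proof. by case: HV => Hl _ _ _ _; have := Hl k a 0 c; rewrite !addr0 sa_mul0l addr0. Qed.

Lemma sa_mulZr k a c : mul a (k *: c) = k *: mul a c.
Proof. by case: HV => _ Hr _ _ _; have := Hr k a c 0; rewrite !addr0 sa_mul0r addr0. Qed.

Lemma sa_mulNl a c : mul (- a) c = - mul a c.
Proof. by rewrite -scaleN1r sa_mulZl scaleN1r. Qed.

Lemma sa_mulNr a c : mul a (- c) = - mul a c.
Proof. by rewrite -scaleN1r sa_mulZr scaleN1r. Qed.

Lemma sa_mulBl a b c : mul (a - b) c = mul a c - mul b c.
Proof. by rewrite sa_mulDl sa_mulNl. Qed.

Lemma sa_mulBr a b c : mul a (b - c) = mul a b - mul a c.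
Proof. by rewrite sa_mulDr sa_mulNr. Qed.

Lemma sa_star0 : star 0 = 0.
Proof.
case: HV => _ _ Hs _ _; have := Hs (-1) 0 0.
by rewrite rmorphN1 !scaleN1r oppr0 add0r addNr.
Qed.

Lemma sa_starD a b : star (a + b) = star a + star b.
Proof. by case: HV => _ _ Hs _ _; have := Hs 1 a b; rewrite rmorph1 !scale1r. Qed.

Lemma sa_starZ k a : star (k *: a) = k^* *: star a.
Proof. by case: HV => _ _ Hs _ _; have := Hs k a 0; rewrite !addr0 sa_star0 addr0. Qed.

Lemma sa_starN a : star (- a) = - star a.
Proof. by rewrite -scaleN1r sa_starZ rmorphN1 scaleN1r. Qed.

Lemma sa_starB a b : star (a - b) = star a - star b.
Proof. by rewrite sa_starD sa_starN. Qed.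

Lemma sa_starK a : star (star a) = a.
Proof. by case: HV. Qed.

Lemma sa_starM a b : star (mul a b) = mul (star b) (star a).
Proof. by case: HV. Qed.

Definition pspace (p : V) (a b : R[i]) (z : V) : Prop :=
  mul p z = a *: z /\ mul z p = b *: z.

(* The twisted product a b + eps b a*; both preserved products are of this
   form, with eps = 1 or eps = -1. *)
Definition tprod (eps : R[i]) (a b : V) : V := mul a b + eps *: mul b (star a).

Lemma tprodDl eps a a' b : tprod eps (a + a') b = tprod eps a b + tprod eps a' b.
Proof. by rewrite /tprod sa_mulDl sa_starD sa_mulDr scalerDr addrACA. Qed.

Lemma tprodDr eps a b b' : tprod eps a (b + b') = tprod eps a b + tprod eps a b'.
Proof. by rewrite /tprod sa_mulDr sa_mulDl scalerDr addrACA. Qed.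

Lemma tprod0l eps b : tprod eps 0 b = 0.
Proof. by rewrite /tprod sa_mul0l sa_star0 sa_mul0r scaler0 addr0. Qed.

Lemma tprod0r eps a : tprod eps a 0 = 0.
Proof. by rewrite /tprod sa_mul0l sa_mul0r scaler0 addr0. Qed.

Section Alternative.
Hypothesis alt : alternative mul.

Definition asc a b c : V := mul (mul a b) c - mul a (mul b c).

Lemma ascE a b c : mul (mul a b) c = asc a b c + mul a (mul b c).
Proof. by rewrite /asc subrK. Qed.

Lemma ascE' a b c : mul a (mul b c) = mul (mul a b) c - asc a b c.
Proof. by rewrite /asc opprB addrC subrK. Qed.

Lemma ascDl a a' b c : asc (a + a') b c = asc a b c + asc a' b c.
Proof. by rewrite /asc !sa_mulDl addrACA opprD. Qed.

Lemma ascDm a b b' c : asc a (b + b') c = asc a b c + asc a b' c.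
Proof. by rewrite /asc sa_mulDr sa_mulDl sa_mulDl sa_mulDr addrACA opprD. Qed.

Lemma ascDr a b c c' : asc a b (c + c') = asc a b c + asc a b c'.
Proof. by rewrite /asc !sa_mulDr addrACA opprD. Qed.

(* Alternativity makes the associator alternating, hence cyclic. *)
Lemma asc_swap12 a b c : asc a b c = - asc b a c.
Proof.
have z x y : asc x x y = 0 by rewrite /asc alt.1 subrr.
have := z (a + b) c; rewrite ascDl !ascDm !z add0r addr0.
by move/eqP; rewrite addr_eq0 => /eqP.
Qed.

Lemma asc_swap23 a b c : asc a b c = - asc a c b.
Proof.
have z x y : asc y x x = 0 by rewrite /asc alt.2 subrr.
have := z (b + c) a; rewrite ascDr !ascDm !z add0r addr0.
by move/eqP; rewrite addr_eq0 => /eqP ->; rewrite opprK.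
Qed.

Lemma asc_cyc a b c : asc a b c = asc b c a.
Proof. by rewrite asc_swap12 asc_swap23 opprK. Qed.

Definition annihilator (I : set V) : set V :=
  fun w => forall z, I z -> mul z w = 0 /\ mul w z = 0.

Lemma annihilator_ideal I : is_ideal mul I -> is_ideal mul (annihilator I).
Proof.
case=> I0 Ilin IL IR.
have asc_ann w a z : annihilator I w -> I z -> asc w z a = 0.
  move=> Hw Iz; rewrite /asc (Hw z Iz).2 (Hw _ (IR a z Iz)).2.
  by rewrite sa_mul0l subrr.
split.
- by move=> z _; rewrite sa_mul0l sa_mul0r.
- move=> k a b Ha Hb z Iz; have [h1 h2] := Ha z Iz; have [h3 h4] := Hb z Iz.
  by rewrite sa_mulDr sa_mulZr sa_mulDl sa_mulZl h1 h2 h3 h4 scaler0 addr0.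
- move=> a w Hw z Iz; split.
  + by rewrite ascE' (Hw _ (IR a z Iz)).1 asc_cyc asc_cyc asc_ann // subrr.
  + by rewrite ascE (Hw z Iz).2 sa_mul0r addr0 asc_cyc asc_ann.
- move=> a w Hw z Iz.
  have e : asc w a z = 0 by rewrite asc_swap12 asc_cyc asc_ann // oppr0.
  split.
  + by rewrite ascE' (Hw z Iz).1 sa_mul0l asc_cyc e subrr.
  + by rewrite ascE e add0r (Hw _ (IL a z Iz)).2.
Qed.

End Alternative.
End StarAlgebra.

Record proj_in_alt (R : realType) (V : lmodType R[i]) (mul : V -> V -> V)
    (star : V -> V) (one p : V) : Prop := ProjInAlt {
  pa_star_alg : complex_star_algebra mul star;
  pa_alt : alternative mul;
  pa_unit : forall a, mul one a = a /\ mul a one = a;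
  pa_idem : mul p p = p;
  pa_selfadj : star p = p }.

Section Peirce.
Variables (R : realType) (V : lmodType R[i]) (mul : V -> V -> V) (star : V -> V).
Variables (one p : V).
Hypothesis P : proj_in_alt mul star one p.
Let HV := pa_star_alg P.
Let alt := pa_alt P.
Local Notation pA := (pspace mul p).

(* p is idempotent in every product where it appears twice (alternative
   and flexible laws). *)
Lemma p_mull y : mul p (mul p y) = mul p y.
Proof. by rewrite alt.1 (pa_idem P). Qed.

Lemma p_mulr y : mul (mul y p) p = mul y p.
Proof. by rewrite alt.2 (pa_idem P). Qed.

Lemma p_flex y : mul p (mul y p) = mul (mul p y) p.
Proof.
have := asc_swap23 HV alt p y p; rewrite {2}/asc alt.1 subrr oppr0 /asc.
by move/eqP; rewrite subr_eq0 => /eqP.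
Qed.

Lemma pspace_mul a b c d e f z y :
  pA a b z -> pA c d y -> a + b - c = e -> d - b + c = f -> pA e f (mul z y).
Proof.
move=> [hz1 hz2] [hy1 hy2] <- <-.
have h : asc mul z p y = (b - c) *: mul z y.
  by rewrite /asc hz2 hy1 (sa_mulZl HV) (sa_mulZr HV) scalerBl.
split.
- have := asc_swap12 HV alt p z y; rewrite h /asc hz1 (sa_mulZl HV) => E.
  have -> : mul p (mul z y) = a *: mul z y - (a *: mul z y - mul p (mul z y)).
    by rewrite opprB addrC subrK.
  by rewrite E opprK -scalerDl; congr (_ *: _); ring.
- have := asc_swap23 HV alt z y p; rewrite h /asc hy2 (sa_mulZr HV) => E.
  have -> : mul (mul z y) p = (mul (mul z y) p - d *: mul z y) + d *: mul z y.
    by rewrite subrK.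
  by rewrite E -scaleNr -scalerDl; congr (_ *: _); ring.
Qed.

Lemma pspace_nonidem_zero a b w :
  pA a b w -> a * a != a \/ b * b != b -> w = 0.
Proof.
move=> [h1 h2] [ha|hb].
- by apply: (nonidem_scale_zero ha); rewrite -h1 -(sa_mulZr HV) -h1 alt.1 (pa_idem P).
- by apply: (nonidem_scale_zero hb); rewrite -h2 -(sa_mulZl HV) -h2 alt.2 (pa_idem P).
Qed.

Lemma pspace_mul0 a b c d k z y : pA a b z -> pA c d y ->
  k * k != k -> a + b - c = k \/ d - b + c = k -> mul z y = 0.
Proof.
move=> hz hy hk [e|f].
- by apply: (pspace_nonidem_zero (pspace_mul hz hy e erefl)); left.
- by apply: (pspace_nonidem_zero (pspace_mul hz hy erefl f)); right.
Qed.

Lemma pspace_lin k a b z z' : pA a b z -> pA a b z' -> pA a b (k *: z + z').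
Proof.
move=> [h1 h2] [h1' h2']; split.
- by rewrite (sa_mulDr HV) (sa_mulZr HV) h1 h1' scalerDr !scalerA mulrC.
- by rewrite (sa_mulDl HV) (sa_mulZl HV) h2 h2' scalerDr !scalerA mulrC.
Qed.

Lemma pspace0 a b : pA a b 0.
Proof. by rewrite /pspace (sa_mul0l HV) (sa_mul0r HV) !scaler0. Qed.

Lemma pspace_scale k a b z : pA a b z -> pA a b (k *: z).
Proof. by move=> h; have := pspace_lin k h (pspace0 a b); rewrite addr0. Qed.

Lemma pspace_star a b z : pA a b z -> pA b^* a^* (star z).
Proof.
move=> [h1 h2]; split.
- by rewrite -{1}(pa_selfadj P) -(sa_starM HV) h2 (sa_starZ HV).
- by rewrite -{1}(pa_selfadj P) -(sa_starM HV) h1 (sa_starZ HV).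
Qed.

Lemma pspace_star11 z : pA 1 1 z -> pA 1 1 (star z).
Proof. by move/pspace_star; rewrite rmorph1. Qed.

Lemma pspace_star10 z : pA 1 0 z -> pA 0 1 (star z).
Proof. by move/pspace_star; rewrite rmorph1 rmorph0. Qed.

Lemma pspace_star01 z : pA 0 1 z -> pA 1 0 (star z).
Proof. by move/pspace_star; rewrite rmorph1 rmorph0. Qed.

Lemma pspace_11 a : pA 1 1 (mul (mul p a) p).
Proof. by rewrite /pspace !scale1r p_flex p_mull p_mulr. Qed.

Lemma pspace_10 a : pA 1 0 (mul (mul p a) (one - p)).
Proof.
rewrite /pspace scale1r scale0r (sa_mulBr HV) (pa_unit P _).2 (sa_mulBr HV).
by rewrite (sa_mulBl HV) p_mull p_flex p_mull p_mulr subrr.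
Qed.

Lemma peirce_decomp x : exists x11 x12 x21 x22,
  [/\ pA 1 1 x11, pA 1 0 x12, pA 0 1 x21, pA 0 0 x22 & x = x11 + x12 + x21 + x22].
Proof.
exists (mul p (mul x p)), (mul p x - mul p (mul x p)), (mul x p - mul p (mul x p)),
  (x - mul p x - mul x p + mul p (mul x p)).
split.
- by rewrite /pspace !scale1r p_mull p_flex p_mulr.
- rewrite /pspace scale1r scale0r (sa_mulBr HV) (sa_mulBl HV) !p_mull.
  by rewrite p_flex p_mulr subrr.
- rewrite /pspace scale1r scale0r (sa_mulBr HV) (sa_mulBl HV) p_mull p_mulr.
  by rewrite subrr p_flex p_mulr.
- rewrite /pspace scale0r; split.
    by rewrite !(sa_mulDr HV) !(sa_mulNr HV) !p_mull subrr sub0r addNr.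
  rewrite !(sa_mulDl HV) !(sa_mulNl HV) p_mulr p_flex p_mulr.
  by rewrite (addrAC (mul x p)) subrr sub0r addNr.
- by rewrite (addrC (mul p (mul x p))) subrK addrACA subrK addrA subrK
    (addrC (mul p x)) subrK.
Qed.

Lemma pspace_comp a b z : pA a b z -> pspace mul (one - p) (1 - a) (1 - b) z.
Proof.
move=> [h1 h2]; split.
- by rewrite (sa_mulBl HV) (pa_unit P z).1 h1 scalerBl scale1r.
- by rewrite (sa_mulBr HV) (pa_unit P z).2 h2 scalerBl scale1r.
Qed.

Lemma proj_comp : proj_in_alt mul star one (one - p).
Proof.
case: P => _ _ Hu Hp Hs; split => //.
- by rewrite (sa_mulBr HV) !(sa_mulBl HV) (Hu one).1 (Hu p).2 (Hu p).1 Hp subrr subr0.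
- have s1 : star one = one.
    by rewrite -[LHS](Hu (star one)).2 -[X in mul _ X](sa_starK HV) -(sa_starM HV)
      (Hu _).2 (sa_starK HV).
  by rewrite (sa_starB HV) s1 Hs.
Qed.

Lemma pspace_uncomp a b z : pspace mul (one - p) a b z -> pA (1 - a) (1 - b) z.
Proof.
move=> [h1 h2]; split.
- by rewrite scalerBl scale1r -h1 (sa_mulBl HV) (pa_unit P z).1 opprB addrC subrK.
- by rewrite scalerBl scale1r -h2 (sa_mulBr HV) (pa_unit P z).2 opprB addrC subrK.
Qed.

(* Elements of A_12 and A_21, i.e. those with p x + x p = x. *)
Definition offdiag (w : V) : Prop := pA 1 0 w \/ pA 0 1 w.

Lemma offdiag_comp w : offdiag w -> mul (one - p) w + mul w (one - p) = w.
Proof.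
by case=> /pspace_comp [-> ->]; rewrite !subrr subr0 scale0r scale1r ?add0r ?addr0.
Qed.

Lemma sym_zero x : mul p x + mul x p = 0 -> pA 0 0 x.
Proof.
move=> h.
have h1 : mul p (mul x p) = - mul p x.
  have := congr1 (mul p) h; rewrite (sa_mulDr HV) p_mull (sa_mul0r HV).
  by move/eqP; rewrite addr_eq0 => /eqP ->; rewrite opprK.
have h2 : mul (mul p x) p = - mul x p.
  have := congr1 (mul^~ p) h; rewrite /= (sa_mulDl HV) p_mulr (sa_mul0l HV).
  by move/eqP; rewrite addr_eq0 => /eqP.
have h3 : mul p x = mul x p by apply: oppr_inj; rewrite -h1 -h2 p_flex.
have h4 : mul p x = 0.
  have : (2 : R[i]) *: mul p x = 0 by rewrite scaler_nat mulr2n {2}h3.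
  by move/eqP; rewrite scaler_eq0 pnatr_eq0 => /eqP.
by split; rewrite scale0r // -h3.
Qed.

(* An off-diagonal z with z + eps z* = 0 vanishes, since z* lies in the
   opposite off-diagonal space. *)
Lemma twist_zero10 eps z : pA 1 0 z -> z + eps *: star z = 0 -> z = 0.
Proof.
move=> hz h; have [h3 _] := pspace_star10 hz.
have := congr1 (mul p) h; rewrite (sa_mulDr HV) (sa_mulZr HV) h3 hz.1 (sa_mul0r HV).
by rewrite !scale0r scaler0 addr0 scale1r.
Qed.

Lemma twist_zero01 eps z : pA 0 1 z -> z + eps *: star z = 0 -> z = 0.
Proof.
move=> hz h; have [_ h4] := pspace_star01 hz.
have := congr1 (mul^~ p) h; rewrite /= (sa_mulDl HV) (sa_mulZl HV) h4 hz.2.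
by rewrite (sa_mul0l HV) !scale0r scaler0 addr0 scale1r.
Qed.

(* Twisted products with p on either side act diagonally on Peirce spaces;
   lam is chosen with eps lam^* = lam so that lam p behaves like p. *)
Lemma tprod_proj_sym eps lam y : eps * lam^* = lam ->
  tprod mul star eps (lam *: p) y = lam *: (mul p y + mul y p).
Proof.
move=> Hel; rewrite /tprod (sa_starZ HV) (pa_selfadj P) (sa_mulZl HV) (sa_mulZr HV).
by rewrite scalerA Hel scalerDr.
Qed.

Lemma tprod_proj_left eps lam a b z : eps * lam^* = lam -> pA a b z ->
  tprod mul star eps (lam *: p) z = (lam * (a + b)) *: z.
Proof.
by move=> Hel [h1 h2]; rewrite tprod_proj_sym // h1 h2 -scalerDl scalerA.
Qed.

Lemma tprod_proj_right eps a b z : pA a b z ->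
  tprod mul star eps z p = b *: z + (eps * b^*) *: star z.
Proof.
by move=> hz; have [_ h2] := hz; have [h3 _] := pspace_star hz; rewrite /tprod h2 h3 scalerA.
Qed.

Lemma tprod_proj_right0 eps a z : pA a 0 z -> tprod mul star eps z p = 0.
Proof. by move/tprod_proj_right ->; rewrite rmorph0 mulr0 !scale0r addr0. Qed.

(* The elements of A_11 annihilating A_12 on the right and A_21 on the left.
   This is an ideal, and primeness forces it to vanish. *)
Definition corner_kernel : set V := fun s =>
  [/\ pA 1 1 s, forall y, pA 1 0 y -> mul s y = 0 & forall v, pA 0 1 v -> mul v s = 0].

(* The corner kernel is closed under star and under left multiplication
   (only the A_11-part of the multiplier acts, and associators vanish);
   right multiplication follows by taking adjoints. *)
Lemma corner_kernel_star s : corner_kernel s -> corner_kernel (star s).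
Proof.
case=> hs hsy hvs; split; first exact: pspace_star11.
- move=> y hy; rewrite -[y](sa_starK HV) -(sa_starM HV) hvs ?(sa_star0 HV) //.
  exact: pspace_star10.
- move=> v hv; rewrite -[v](sa_starK HV) -(sa_starM HV) hsy ?(sa_star0 HV) //.
  exact: pspace_star01.
Qed.

Lemma corner_kernel_mull a x : corner_kernel x -> corner_kernel (mul a x).
Proof.
case=> x11 xy vx.
have [a11 [a12 [a21 [a22 [h11 h12 h21 h22 ->]]]]] := peirce_decomp a.
have a11_acts : mul (a11 + a12 + a21 + a22) x = mul a11 x.
  rewrite !(sa_mulDl HV) (vx a21 h21) addr0.
  rewrite (pspace_mul0 h12 x11 (two_nonidem R)); last by right; ring.
  rewrite (pspace_mul0 h22 x11 (m1_nonidem R)); last by left; ring.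
  by rewrite !addr0.
have hax : pA 1 1 (mul a11 x) by apply: (pspace_mul h11 x11); ring.
rewrite a11_acts; split => //.
- move=> y hy; rewrite ascE xy // (sa_mul0r HV) addr0 (asc_cyc HV alt) /asc xy //.
  rewrite (pspace_mul0 hy h11 (two_nonidem R)); last by right; ring.
  by rewrite (sa_mul0l HV) (sa_mul0r HV) subrr.
- move=> v hv; have hva : pA 0 1 (mul v a11) by apply: (pspace_mul hv h11); ring.
  rewrite ascE' vx // (asc_cyc HV alt) /asc.
  rewrite (pspace_mul0 hax hv (two_nonidem R)); last by left; ring.
  rewrite (pspace_mul0 x11 hv (two_nonidem R)); last by left; ring.
  by rewrite (sa_mul0r HV) !subrr.
Qed.

Lemma corner_kernel_mulr a x : corner_kernel x -> corner_kernel (mul x a).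
Proof.
move=> hx; rewrite -[mul x a](sa_starK HV) (sa_starM HV).
exact/corner_kernel_star/corner_kernel_mull/corner_kernel_star.
Qed.

Lemma corner_kernel_ideal : is_ideal mul corner_kernel.
Proof.
split.
- split; first exact: pspace0.
    by move=> y _; rewrite (sa_mul0l HV).
  by move=> v _; rewrite (sa_mul0r HV).
- move=> k a b [a1 a2 a3] [b1 b2 b3]; split; first exact: pspace_lin.
  + by move=> y hy; rewrite (sa_mulDl HV) (sa_mulZl HV) a2 // b2 // scaler0 addr0.
  + by move=> v hv; rewrite (sa_mulDr HV) (sa_mulZr HV) a3 // b3 // scaler0 addr0.
- exact: corner_kernel_mull.
- exact: corner_kernel_mulr.
Qed.

(* In a prime algebra with p <> 1 the corner kernel is trivial: 1 - p is a
   nonzero element of its annihilator. *)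
Lemma corner_kernel_trivial s :
  prime_alg mul -> p != one -> corner_kernel s -> s = 0.
Proof.
move=> Hprime Hp1 hs.
have Jideal := annihilator_ideal HV alt corner_kernel_ideal.
have [E|E] := Hprime _ _ corner_kernel_ideal Jideal (fun x y Ix Jy => (Jy x Ix).1).
  by move: hs; rewrite E.
have : annihilator mul corner_kernel (one - p).
  move=> z [[z1 z2] _ _]; split.
  - by rewrite (sa_mulBr HV) (pa_unit P z).2 z2 scale1r subrr.
  - by rewrite (sa_mulBl HV) (pa_unit P z).1 z1 scale1r subrr.
rewrite E /= => /eqP; rewrite subr_eq0 eq_sym => /eqP h.
by move: Hp1; rewrite h eqxx.
Qed.

Lemma twisted_kernel eps s : eps * eps = 1 -> pA 1 1 s -> s + eps *: star s = 0 ->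
  (forall y, pA 1 0 y -> mul s y = 0) -> forall v, pA 0 1 v -> mul v s = 0.
Proof.
move=> He hs htw K1 v hv.
have sstar : star s = - eps *: s.
  have : eps *: star s = - s by apply/eqP; rewrite -addr_eq0 addrC htw.
  move/(congr1 ( *:%R eps)); rewrite scalerA He scale1r => ->.
  by rewrite scalerN scaleNr.
rewrite -[mul v s](sa_starK HV) (sa_starM HV) sstar (sa_mulZl HV) K1
  ?scaler0 ?(sa_star0 HV) //.
exact: pspace_star01.
Qed.

End Peirce.

Section Transfer.
Variables (R : realType) (A B : lmodType R[i]).
Variables (mulA : A -> A -> A) (starA : A -> A) (mulB : B -> B -> B) (starB : B -> B).
Variables (Phi : A -> B) (eps : R[i]).
Hypothesis HB : complex_star_algebra mulB starB.
Hypothesis Hpres : forall a b,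
  Phi (tprod mulA starA eps a b) = tprod mulB starB eps (Phi a) (Phi b).
Local Notation tpA := (tprod mulA starA eps).

Lemma pres_zero a0 : complex_star_algebra mulA starA -> Phi a0 = 0 -> Phi 0 = 0.
Proof. by move=> HA h0; have := Hpres a0 0; rewrite (tprod0r HA) h0 (tprod0l HB). Qed.

Definition transfers (W : A -> A) : Prop :=
  forall t u v, Phi t = Phi u + Phi v -> Phi (W t) = Phi (W u) + Phi (W v).

Lemma transfers_tprodl c : transfers (tpA c).
Proof. by move=> t u v Ht; rewrite !Hpres Ht (tprodDr HB). Qed.

Lemma transfers_tprodr c : transfers (tpA^~ c).
Proof. by move=> t u v Ht; rewrite !Hpres Ht (tprodDl HB). Qed.

Hypothesis Hinj : injective Phi.
Hypothesis Phi0 : Phi 0 = 0.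

Lemma transfer_kill W t u v :
  transfers W -> W v = 0 -> Phi t = Phi u + Phi v -> W t = W u.
Proof. by move=> HW Wv Ht; apply: Hinj; rewrite (HW _ _ _ Ht) Wv Phi0 addr0. Qed.

Lemma transfer_kill_corner W t s a w : transfers W -> {morph W : x y / x + y} ->
  W w = 0 -> Phi t = Phi a + Phi w -> t = s + a + w -> W s = 0.
Proof.
move=> HW WD Ww Ht ht; have := transfer_kill HW Ww Ht.
by rewrite ht !WD Ww addr0 => /eqP; rewrite -subr_eq0 addrK => /eqP.
Qed.

Section Additivity.
Variables (oneA p : A) (lam : R[i]).
Hypothesis P : proj_in_alt mulA starA oneA p.
Hypothesis Hel : eps * lam^* = lam.
Hypothesis Hl : lam != 0.
Let HA := pa_star_alg P.
Let P2 := proj_comp P.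
Local Notation pA := (pspace mulA p).

(* Transferring through  y |-> tprod (lam (1 - p)) y  kills a in A_11:
   a preimage t of Phi a + Phi w differs from a + w only in A_11. *)
Lemma corner_decomp a w t : pA 1 1 a -> offdiag mulA p w ->
  Phi t = Phi a + Phi w -> exists2 s, pA 1 1 s & t = s + a + w.
Proof.
move=> ha hw Ht.
have Qa : tpA (lam *: (oneA - p)) a = 0.
  by rewrite (tprod_proj_left P2 Hel (pspace_comp P ha)) !subrr addr0 mulr0 scale0r.
have := transfer_kill (transfers_tprodl (lam *: (oneA - p))) Qa
  (etrans Ht (addrC _ _)).
rewrite !(tprod_proj_sym P2 _ Hel) (offdiag_comp P hw) => /(scalerI Hl) Qt.
have hx : pA 1 1 (t - w).
  have h0 : mulA (oneA - p) (t - w) + mulA (t - w) (oneA - p) = 0.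
    rewrite (sa_mulBr HA (oneA - p) t w) (sa_mulBl HA t w) addrACA -opprD Qt.
    by rewrite (offdiag_comp P hw) subrr.
  by have := pspace_uncomp P (sym_zero P2 h0); rewrite subr0.
exists (t - w - a); last by rewrite !subrK.
by rewrite addrC -scaleN1r; apply: (pspace_lin P).
Qed.

(* The probe  w |-> F_(1-p) (Q_(lam p) (F_y w)),  with Q_c = tprod c _ and
   F_c = tprod _ c, detects s y for s in A_11 and kills A_12 and A_21. *)
Definition corner_probe (y w : A) : A := tpA (tpA (lam *: p) (tpA w y)) (oneA - p).

Lemma probe_transfers y : transfers (corner_probe y).
Proof.
move=> t u v Ht; apply: transfers_tprodr; apply: transfers_tprodl.
exact: transfers_tprodr.
Qed.

Lemma probe_additive y : {morph corner_probe y : u v / u + v}.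
Proof.
by move=> u v; rewrite /corner_probe (tprodDl HA) (tprodDr HA _ (lam *: p)) (tprodDl HA).
Qed.

Lemma probe_class_zero a b z : pA a b z -> b = 1 \/ a + b = 0 ->
  tpA (tpA (lam *: p) z) (oneA - p) = 0.
Proof.
move=> hz hab; rewrite (tprod_proj_left P Hel hz).
rewrite (tprod_proj_right P2 eps (pspace_comp P (pspace_scale P (lam * (a + b)) hz))).
case: hab => [->|->].
- by rewrite subrr rmorph0 mulr0 !scale0r addr0.
- by rewrite mulr0 !scale0r (sa_star0 HA) !scaler0 addr0.
Qed.

(* F_y maps A_12 and A_21 into such spaces, so the probe kills them. *)
Lemma probe_offdiag w y : offdiag mulA p w -> pA 1 0 y -> corner_probe y w = 0.
Proof.
move=> hw hy.
have -> : corner_probe y w = tpA (tpA (lam *: p) (mulA w y)) (oneA - p) +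
    tpA (tpA (lam *: p) (eps *: mulA y (starA w))) (oneA - p).
  by rewrite /corner_probe -(tprodDl HA) -(tprodDr HA).
case: hw => hw; [have hw' := pspace_star10 P hw | have hw' := pspace_star01 P hw];
  rewrite (probe_class_zero (pspace_mul P hw hy erefl erefl))
    ?(probe_class_zero (pspace_scale P eps (pspace_mul P hy hw' erefl erefl)))
    ?addr0 //; (left + right); ring.
Qed.

(* On s in A_11 the probe gives z + eps z* with z = lam s y in A_12. *)
Lemma probe_diag s y : pA 1 1 s -> pA 1 0 y -> corner_probe y s = 0 -> mulA s y = 0.
Proof.
move=> hs hy.
have hsy : pA 1 0 (mulA s y) by apply: (pspace_mul P hs hy); ring.
have tp_sy : tpA s y = mulA s y.
  rewrite /tprod (pspace_mul0 P hy (pspace_star11 P hs) (two_nonidem R)).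
    by rewrite scaler0 addr0.
  by right; ring.
rewrite /corner_probe tp_sy (tprod_proj_left P Hel hsy).
rewrite (tprod_proj_right P2 eps (pspace_comp P (pspace_scale P _ hsy))).
rewrite !subr0 addr0 mulr1 rmorph1 mulr1 scale1r.
move/(twist_zero10 P (pspace_scale P _ hsy))/eqP.
by rewrite scaler_eq0 (negPf Hl) => /eqP.
Qed.

Lemma kills_A12 s a w t : pA 1 1 s -> offdiag mulA p w ->
  Phi t = Phi a + Phi w -> t = s + a + w -> forall y, pA 1 0 y -> mulA s y = 0.
Proof.
move=> hs hw Ht ht y hy; apply: (probe_diag hs hy).
exact: (transfer_kill_corner (probe_transfers y) (probe_additive y)
  (probe_offdiag hw hy) Ht ht).
Qed.

(* For w in A_12, transferring through F_p (which kills w) gives s* = -eps s. *)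
Lemma twist_A12 s a w t : pA 1 1 s -> pA 1 0 w ->
  Phi t = Phi a + Phi w -> t = s + a + w -> s + eps *: starA s = 0.
Proof.
move=> hs hw Ht ht.
have := transfer_kill_corner (transfers_tprodr p) (fun u v => tprodDl HA eps u v p)
  (tprod_proj_right0 P eps hw) Ht ht.
by rewrite /= (tprod_proj_right P eps hs) rmorph1 mulr1 scale1r.
Qed.

(* For w in A_21, transferring through F_p o Q_v shows v s = 0 for v in A_21. *)
Lemma kills_A21 s a w t : pA 1 1 s -> pA 0 1 w ->
  Phi t = Phi a + Phi w -> t = s + a + w -> forall v, pA 0 1 v -> mulA v s = 0.
Proof.
move=> hs hw Ht ht v hv.
have hv' := pspace_star01 P hv.
pose W x := tpA (tpA v x) p.
have WT : transfers W.
  by move=> t' u' v' H; apply: transfers_tprodr; exact: transfers_tprodl.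
have WD : {morph W : x y / x + y} by move=> x y; rewrite /W (tprodDr HA) (tprodDl HA).
have tpv x : tpA v x = mulA v x + eps *: mulA x (starA v) by [].
have Ww : W w = 0.
  have h1 : pA 1 0 (mulA v w) by apply: (pspace_mul P hv hw); ring.
  have h2 : pA 0 0 (mulA w (starA v)) by apply: (pspace_mul P hw hv'); ring.
  by rewrite /W tpv (tprodDl HA) (tprod_proj_right0 P eps h1)
    (tprod_proj_right0 P eps (pspace_scale P eps h2)) addr0.
have h1 : pA 0 1 (mulA v s) by apply: (pspace_mul P hv hs); ring.
have h2 : pA 1 0 (mulA s (starA v)) by apply: (pspace_mul P hs hv'); ring.
have := transfer_kill_corner WT WD Ww Ht ht.
rewrite /W tpv (tprodDl HA) (tprod_proj_right0 P eps (pspace_scale P eps h2)) addr0.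
rewrite (tprod_proj_right P eps h1) rmorph1 mulr1 scale1r.
by move/(twist_zero01 P h1).
Qed.

Hypothesis Hprime : prime_alg mulA.
Hypothesis Hp1 : p != oneA.

Lemma preimage_11_12 a b t : eps * eps = 1 -> pA 1 1 a -> pA 1 0 b ->
  Phi t = Phi a + Phi b -> t = a + b.
Proof.
move=> He ha hb Ht.
have hw : offdiag mulA p b by left.
have [s hs ht] := corner_decomp ha hw Ht.
have K1 := kills_A12 hs hw Ht ht.
have K2 := twisted_kernel P He hs (twist_A12 hs hb Ht ht) K1.
by rewrite ht (corner_kernel_trivial P Hprime Hp1 (And3 hs K1 K2)) add0r.
Qed.

Lemma preimage_11_21 a c t : pA 1 1 a -> pA 0 1 c ->
  Phi t = Phi a + Phi c -> t = a + c.
Proof.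
move=> ha hc Ht.
have hw : offdiag mulA p c by right.
have [s hs ht] := corner_decomp ha hw Ht.
have K1 := kills_A12 hs hw Ht ht.
have K2 := kills_A21 hs hc Ht ht.
by rewrite ht (corner_kernel_trivial P Hprime Hp1 (And3 hs K1 K2)) add0r.
Qed.

End Additivity.
End Transfer.

Lemma conj_i (R : realType) : ('i%C : R[i])^* = - 'i%C.
Proof. by apply/eqP; rewrite eq_complex /= oppr0 !eqxx. Qed.

(* Both preserved products are twisted products, with (eps, lam) = (1, 1)
   or (-1, i). *)
Lemma twisted_form (R : realType) (A B : lmodType R[i]) (mulA : A -> A -> A)
    (starA : A -> A) (mulB : B -> B -> B) (starB : B -> B) (Phi : A -> B) :
  (forall a b, Phi (mulA a b + mulA b (starA a)) =
               mulB (Phi a) (Phi b) + mulB (Phi b) (starB (Phi a))) \/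
  (forall a b, Phi (mulA a b - mulA b (starA a)) =
               mulB (Phi a) (Phi b) - mulB (Phi b) (starB (Phi a))) ->
  exists eps lam : R[i], [/\ eps * eps = 1, lam != 0, eps * lam^* = lam &
    forall a b, Phi (tprod mulA starA eps a b) = tprod mulB starB eps (Phi a) (Phi b)].
Proof.
case=> Hpres.
- exists 1, 1; split; rewrite ?mulr1 ?oner_neq0 ?rmorph1 ?mulr1 //.
  by move=> a b; rewrite /tprod !scale1r.
- exists (-1), 'i%C; split; rewrite ?mulrNN ?mulr1 ?conj_i ?mulrNN ?mul1r //.
  + by rewrite eq_complex /= oner_eq0 andbF.
  + by move=> a b; rewrite /tprod !scaleN1r.
Qed.

Unset Implicit Arguments.

Theorem claim2p1 (R : realType)
  (A : completeNormedModType R[i]) (mulA : A -> A -> A) (starA : A -> A) (oneA : A)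
  (B : lmodType R[i]) (mulB : B -> B -> B) (starB : B -> B)
  (Phi : A -> B) (p1 : A) :
  alternative_Wstar_factor mulA starA oneA ->
  alternative_star_algebra mulB starB ->
  bijective Phi ->
  ((forall a b : A, Phi (mulA a b + mulA b (starA a)) =
                    mulB (Phi a) (Phi b) + mulB (Phi b) (starB (Phi a))) \/
   (forall a b : A, Phi (mulA a b - mulA b (starA a)) =
                    mulB (Phi a) (Phi b) - mulB (Phi b) (starB (Phi a)))) ->
  projection mulA starA p1 -> p1 != oneA ->
  let p2 := oneA - p1 in
  forall a11 b12 c21 d22 : A,
    peirce mulA p1 p1 a11 -> peirce mulA p1 p2 b12 ->
    peirce mulA p2 p1 c21 -> peirce mulA p2 p2 d22 ->
    [/\ Phi (a11 + b12) = Phi a11 + Phi b12,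
        Phi (a11 + c21) = Phi a11 + Phi c21,
        Phi (b12 + d22) = Phi b12 + Phi d22 &
        Phi (c21 + d22) = Phi c21 + Phi d22].
Proof.
move=> [[[HA alt] _ _] Hprime _ Hunit] [HB _] Hbij Hpres [p1_neq0 p1_sa p1_idem]
  p1_neq1 p2 a11 b12 c21 d22 [a ->] [b ->] [c ->] [d ->].
have P1 : proj_in_alt mulA starA oneA p1 by split.
have P2 : proj_in_alt mulA starA oneA p2 := proj_comp P1.
have p1E : oneA - p2 = p1 by rewrite subKr.
have p2_neq1 : p2 != oneA by apply: contra p1_neq0 => /eqP h; rewrite -p1E h subrr.
have [eps [lam [He Hl Hel Htw]]] := @twisted_form R A B mulA starA mulB starB Phi Hpres.
have [g _ Phig] := Hbij.
have Phi0 := pres_zero HB Htw HA (Phig 0).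
have pre_1112 := preimage_11_12 HB Htw (bij_inj Hbij) Phi0.
have pre_1121 := preimage_11_21 HB Htw (bij_inj Hbij) Phi0.
have additive u v : (forall t, Phi t = Phi u + Phi v -> t = u + v) ->
    Phi (u + v) = Phi u + Phi v.
  by move=> H; rewrite -{1}(H _ (Phig _)) Phig.
have hb1 := pspace_10 P1 b.
have hc2 : pspace mulA p2 1 0 (mulA (mulA p2 c) p1).
  by rewrite -p1E; exact: (pspace_10 P2 c).
have hb2 : pspace mulA p2 0 1 (mulA (mulA p1 b) p2).
  by have := pspace_comp P1 hb1; rewrite subrr subr0.
have hc1 : pspace mulA p1 0 1 (mulA (mulA p2 c) p1).
  by have := pspace_comp P2 hc2; rewrite p1E subrr subr0.
split; [| | rewrite addrC [RHS]addrC.. ]; apply: additive => t.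
- exact: pre_1112 P1 Hel Hl Hprime p1_neq1 _ _ _ He (pspace_11 P1 a) hb1.
- exact: pre_1121 P1 Hel Hl Hprime p1_neq1 _ _ _ (pspace_11 P1 a) hc1.
- exact: pre_1121 P2 Hel Hl Hprime p2_neq1 _ _ _ (pspace_11 P2 d) hb2.
- exact: pre_1112 P2 Hel Hl Hprime p2_neq1 _ _ _ He (pspace_11 P2 d) hc2.
Qed.
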